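(* Let $\Phi=\{\phi_i\}_{i=1}^l$ be an arbitrary IFS of contractions on $\mathbb R^d$ and let $\mu=\mathfrak m\circ\pi^{-1}$ be the pushforward of a $\sigma$-invariant ergodic probability measure $\mathfrak m$ on $\mathcal D^{\mathbb N}$. Then $\mu$ is of pure type: either $\mu\ll\mathcal L$ or $\mu\perp\mathcal L$, where $\mathcal L$ is $d$-dimensional Lebesgue measure.
   Context: $\pi((a_j))=\lim_n\phi_{a_1}\circ\cdots\circ\phi_{a_n}(0)$; $\sigma$ is the left shift on $\mathcal D^{\mathbb N}$, $\mathcal D=\{1,\ldots,l\}$. *)

From HB Require Import structures.
From mathcomp Require Import all_boot all_order all_algebra.
From mathcomp Require Import all_classical all_reals all_analysis.
Set Implicit Arguments. Unset Strict Implicit. Unset Printing Implicit Defensive.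
Import Order.TTheory GRing.Theory Num.Theory.
Import numFieldNormedType.Exports.
Local Open Scope classical_set_scope.
Local Open Scope ring_scope.

Definition eucl_norm {R : realType} {d : nat} (x : 'rV[R]_d) : R :=
  Num.sqrt (\sum_(i < d) (x ord0 i) ^+ 2).

Definition eucl_contraction {R : realType} {d : nat} (f : 'rV[R]_d -> 'rV[R]_d) : Prop :=
  exists c : R, 0 <= c /\ c < 1 /\
    forall x y, eucl_norm (f x - f y) <= c * eucl_norm (x - y).

(* Borel sets of R^d: the sigma-algebra generated by the open sets
   (the topology of 'rV[R]_d is the usual product = Euclidean topology). *)
Definition borel_set {R : realType} {d : nat} (A : set 'rV[R]_d) : Prop :=
  <<s [set U : set 'rV[R]_d | open U] >> A.

Definition rbox {R : realType} {d : nat} (a b : 'rV[R]_d) : set 'rV[R]_d :=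
  [set x | forall i : 'I_d, a ord0 i <= x ord0 i <= b ord0 i].

Definition box_vol {R : realType} {d : nat} (a b : 'rV[R]_d) : R :=
  \prod_(i < d) Num.max 0 (b ord0 i - a ord0 i).

(* d-dimensional Lebesgue (outer) measure: infimum of the total volume of
   countable covers by boxes.  On Borel sets this is Lebesgue measure. *)
Definition lebesgue_d {R : realType} {d : nat} (A : set 'rV[R]_d) : \bar R :=
  ereal_inf [set s : \bar R | exists a b : nat -> 'rV[R]_d,
     A `<=` \bigcup_k rbox (a k) (b k) /\
     s = (\sum_(0 <= k <oo) ((box_vol (a k) (b k))%:E))%E].

(* 'I_n.+1 is nonempty: point it at ord0 (needed for the measurable-type structure). *)
HB.instance Definition _ (n : nat) := isPointed.Build 'I_n.+1 ord0.

Definition cyl_set {l : nat} (n : nat) (w : nat -> 'I_l.+1) : set (nat -> 'I_l.+1) :=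
  [set a | forall k, (k < n)%N -> a k = w k].

Definition cylinders (l : nat) : set (set (nat -> 'I_l.+1)) :=
  [set C | exists n w, C = cyl_set n w].

Notation shift_space l := (g_sigma_algebraType (@cylinders l)).

Definition left_shift {l : nat} (a : shift_space l) : shift_space l := fun n => a n.+1.

Definition shift_invariant {R : realType} {l : nat}
  (m : probability (shift_space l) R) : Prop :=
  forall A : set (shift_space l), measurable A -> m (left_shift @^-1` A) = m A.

Definition shift_ergodic {R : realType} {l : nat}
  (m : probability (shift_space l) R) : Prop :=
  forall A : set (shift_space l), measurable A -> left_shift @^-1` A = A ->
    m A = 0%E \/ m A = 1%E.

(* phi_{a_1} o ... o phi_{a_n} (letters indexed from 0 here). *)
Fixpoint prefix_comp {R : realType} {d l : nat}
  (Phi : 'I_l.+1 -> 'rV[R]_d -> 'rV[R]_d) (a : nat -> 'I_l.+1) (n : nat)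
  : 'rV[R]_d -> 'rV[R]_d :=
  match n with
  | 0 => id
  | n'.+1 => prefix_comp Phi a n' \o Phi (a n')
  end.

Definition coding {R : realType} {d l : nat}
  (Phi : 'I_l.+1 -> 'rV[R]_d -> 'rV[R]_d) (a : shift_space l) : 'rV[R]_d :=
  limn (fun n => prefix_comp Phi a n 0).

Definition push_coding {R : realType} {d l : nat}
  (Phi : 'I_l.+1 -> 'rV[R]_d -> 'rV[R]_d) (m : probability (shift_space l) R)
  (A : set 'rV[R]_d) : \bar R :=
  m (coding Phi @^-1` A).

Definition abs_cont_leb {R : realType} {d : nat} (mu : set 'rV[R]_d -> \bar R) : Prop :=
  forall A, borel_set A -> lebesgue_d A = 0%E -> mu A = 0%E.

Definition singular_leb {R : realType} {d : nat} (mu : set 'rV[R]_d -> \bar R) : Prop :=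
  exists A, borel_set A /\ mu A = 0%E /\ lebesgue_d (~` A) = 0%E.

(* If mu is not absolutely continuous, some Lebesgue-null Borel set A has
   mu A > 0.  Since pi(a) = phi_{a_0}(pi(sigma a)), every sequence that enters
   pi^-1(A) after n shifts is coded into the set of images of A under the
   compositions of n maps of the IFS; these images form a null set N, because
   Lipschitz maps preserve null sets.  The sequences that eventually enter
   pi^-1(A) form a set of positive measure whose preimage under sigma is
   contained in it, so by invariance and ergodicity it has full measure: mu is
   carried by a Borel null hull of N. *)

From HB Require Import structures.
From mathcomp Require Import all_boot all_order all_algebra.
From mathcomp Require Import all_classical all_reals all_analysis.
From mathcomp Require Import ring lra.
Import Order.TTheory GRing.Theory Num.Theory.
Import numFieldNormedType.Exports.
Set Implicit Arguments. Unset Strict Implicit. Unset Printing Implicit Defensive.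
Local Open Scope classical_set_scope.
Local Open Scope ring_scope.

Section EuclideanNorm.
Variables (R : realType) (d : nat).
Implicit Types x y : 'rV[R]_d.

Lemma eucl_norm_ge0 x : 0 <= eucl_norm x.
Proof. exact: sqrtr_ge0. Qed.

Lemma coord_le_eucl_norm x j : `|x ord0 j| <= eucl_norm x.
Proof.
rewrite /eucl_norm -sqrtr_sqr ler_wsqrtr //.
by rewrite (bigD1 j) //= lerDl sumr_ge0 // => i _; rewrite sqr_ge0.
Qed.

Lemma coord_le_normr x j : `|x ord0 j| <= `|x|.
Proof. by rewrite (_ : `|x| = mx_norm x) // mx_normrE (le_bigmax _ _ (ord0, j)). Qed.

Lemma normr_le_coord x (t : R) : 0 <= t -> (forall j, `|x ord0 j| <= t) -> `|x| <= t.
Proof.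
move=> t0 xt; rewrite (_ : `|x| = mx_norm x) // mx_normrE.
by apply: bigmax_le => // -[i j] _; rewrite (ord1 i).
Qed.

Lemma normr_le_eucl_norm x : `|x| <= eucl_norm x.
Proof. exact: normr_le_coord (eucl_norm_ge0 x) (coord_le_eucl_norm x). Qed.

Lemma eucl_norm_le_normr x : eucl_norm x <= d%:R * `|x|.
Proof.
have dx : 0 <= d%:R * `|x| by rewrite mulr_ge0.
rewrite /eucl_norm -(ger0_norm dx) -sqrtr_sqr ler_wsqrtr //.
apply: (@le_trans _ _ (\sum_(i < d) `|x| ^+ 2)).
  apply: ler_sum => i _; rewrite -real_normK ?num_real //.
  by rewrite lerXn2r ?nnegrE ?coord_le_normr.
rewrite sumr_const card_ord exprMn -[_ *+ d]mulr_natl; apply: ler_wpM2r; first exact: sqr_ge0.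
case: d => [|n]; first by rewrite expr0n.
by rewrite -natrX ler_nat expnS leq_pmulr // expn_gt0.
Qed.

Lemma uniform_eucl_contraction (I : finType) (f : I -> 'rV[R]_d -> 'rV[R]_d) :
  (forall i, eucl_contraction (f i)) ->
  exists2 c, 0 <= c < 1 &
    forall i x y, eucl_norm (f i x - f i y) <= c * eucl_norm (x - y).
Proof.
move=> /choice[k hk]; exists (\big[Num.max/0]_i k i).
  apply/andP; split; first by apply/bigmax_geP; left.
  by apply: bigmax_lt => // i _; have [_ []] := hk i.
move=> i x y; have [_ [_ fi]] := hk i; apply: le_trans (fi x y) _.
by rewrite ler_wpM2r ?eucl_norm_ge0 // (le_bigmax _ _ i).
Qed.

End EuclideanNorm.

Lemma lipschitz_continuous (R : numFieldType) (V W : normedModType R)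
  (f : V -> W) (k : R) : 0 <= k ->
  (forall x y, `|f x - f y| <= k * `|x - y|) -> continuous f.
Proof.
move=> k0 hf x; apply/cvgrPdist_lt => e e0.
have k1 : 0 < k + 1 by rewrite ltr_wpDl.
near=> y; apply: le_lt_trans (hf x y) _.
have : `|x - y| < e / (k + 1) by near: y; apply: cvgr_dist_lt; rewrite ?divr_gt0.
rewrite ltr_pdivlMr // => xy; apply: le_lt_trans xy.
by rewrite mulrC ler_wpM2l // lerDl.
Unshelve. all: by end_near.
Qed.

Section GeometricIncrements.
Variables (R : realType) (p q : nat) (u : nat -> 'M[R]_(p, q)) (M c : R).
Hypotheses (c_ge0 : 0 <= c) (c_lt1 : c < 1).
Hypothesis u_incr : forall n, `|u n.+1 - u n| <= M * c ^+ n.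

Let c1_gt0 : 0 < 1 - c. Proof. by rewrite subr_gt0. Qed.

Let M_ge0 : 0 <= M.
Proof. by have := u_incr 0; rewrite expr0 mulr1; apply: le_trans. Qed.

Lemma geometric_increments_dist n k : `|u (n + k) - u n| <= M * c ^+ n / (1 - c).
Proof.
suff : `|u (n + k) - u n| <= M * (c ^+ n - c ^+ (n + k)) / (1 - c).
  move/le_trans; apply; apply: ler_wpM2r; first by rewrite invr_ge0 ltW.
  by apply: ler_wpM2l => //; rewrite gerBl exprn_ge0.
elim: k => [|k IH]; first by rewrite addn0 !subrr normr0 mulr0 mul0r.
have -> : u (n + k.+1) - u n = (u (n + k).+1 - u (n + k)) + (u (n + k) - u n).
  by rewrite addnS addrA subrK.
apply: le_trans (ler_normD _ _) _; apply: le_trans (lerD (u_incr _) IH) _.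
rewrite addnS exprS ler_pdivlMr // mulrDl divfK ?gt_eqF //.
by rewrite le_eqVlt; apply/orP; left; apply/eqP; ring.
Qed.

Lemma cvg_geometric_increments : cvgn u.
Proof.
apply/cauchy_cvgP/cauchy_exP => e e0.
have c_norm : `|c| < 1 by rewrite ger0_norm.
have /cvgr0Pnorm_lt/(_ e e0)[N _ HN] := cvg_geometric (M / (1 - c)) c_norm.
exists (u N), N => // n /= Nn; rewrite -ball_normE /ball_ /= -(subnKC Nn).
rewrite distrC; apply: le_lt_trans (geometric_increments_dist _ _) _.
have := HN N (leqnn N); rewrite /= ger0_norm; first by rewrite mulrAC.
by rewrite mulr_ge0 ?exprn_ge0 // divr_ge0 // ltW.
Qed.

Lemma geometric_increments_lim n : `|limn u - u n| <= M * c ^+ n / (1 - c).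
Proof.
have ulim : (fun k => `|u k - u n|) @ \oo --> `|limn u - u n|.
  exact: cvg_norm (cvgB cvg_geometric_increments (cvg_cst _)).
apply: (cvgr_to_le ulim); near=> k.
have nk : (n <= k)%N by near: k; exists n.
by rewrite -(subnKC nk) geometric_increments_dist.
Unshelve. all: by end_near.
Qed.

End GeometricIncrements.

Lemma measurable_preimage_generated (dT : measure_display) (T : measurableType dT)
    (U : Type) (f : T -> U) (G : set (set U)) :
  (forall B, G B -> measurable (f @^-1` B)) ->
  forall B, <<s G >> B -> measurable (f @^-1` B).
Proof.
move=> fG; apply: smallest_sub => //; split.
- by rewrite preimage_set0; exact: measurable0.
- by move=> A mA; rewrite setTD preimage_setC; exact: measurableC.
- by move=> A mA; rewrite preimage_bigcup; exact: bigcupT_measurable.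
Qed.

Section ShiftSpace.
Variable l : nat.

Lemma measurable_cyl_set n (w : nat -> 'I_l.+1) :
  measurable (cyl_set n w : set (shift_space l)).
Proof. by apply: sub_sigma_algebra; exists n, w. Qed.

Lemma measurable_left_shift (A : set (shift_space l)) :
  measurable A -> measurable (left_shift @^-1` A).
Proof.
apply: measurable_preimage_generated => _ [n [w ->]].
have -> : left_shift @^-1` cyl_set n w =
    \bigcup_(i : 'I_l.+1) (cyl_set n.+1 (fun k => if k is k'.+1 then w k' else i)
                           : set (shift_space l)).
  apply/seteqP; split => [a /= wa|a [i _ wa] k kn]; last exact: (wa k.+1).
  by exists (a 0%N) => // -[|k] //= /wa.
apply: countable_bigcupT_measurable; first exact: countableP.
by move=> i; exact: measurable_cyl_set.
Qed.

Lemma measurable_iter_left_shift n (A : set (shift_space l)) :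
  measurable A -> measurable (iter n left_shift @^-1` A).
Proof.
move=> mA; elim: n => [//|n IH].
have -> : iter n.+1 left_shift @^-1` A = left_shift @^-1` (iter n left_shift @^-1` A).
  by apply/seteqP; split => a; rewrite /preimage /= -iterS iterSr.
exact: measurable_left_shift.
Qed.

Lemma measurable_bigcup_iter_left_shift (A : set (shift_space l)) :
  measurable A -> measurable (\bigcup_n iter n left_shift @^-1` A).
Proof. by move=> mA; apply: bigcupT_measurable => n; exact: measurable_iter_left_shift. Qed.

End ShiftSpace.

Section Coding.
Variables (R : realType) (d l : nat) (Phi : 'I_l.+1 -> 'rV[R]_d -> 'rV[R]_d).
Variables (c M : R).
Hypotheses (c_ge0 : 0 <= c) (c_lt1 : c < 1).
Hypothesis Phi_contraction :
  forall i x y, eucl_norm (Phi i x - Phi i y) <= c * eucl_norm (x - y).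
Hypothesis Phi0_le : forall i, eucl_norm (Phi i 0) <= M.

Local Notation pc := (prefix_comp Phi).
Implicit Types a b : nat -> 'I_l.+1.

Lemma prefix_compSl a n x : pc a n.+1 x = Phi (a 0%N) (pc (left_shift a) n x).
Proof. by elim: n x => [//|n IH] x; rewrite /= -IH. Qed.

Lemma prefix_comp_contraction a n x y :
  eucl_norm (pc a n x - pc a n y) <= c ^+ n * eucl_norm (x - y).
Proof.
elim: n a x y => [|n IH] a x y; first by rewrite expr0 mul1r.
rewrite !prefix_compSl; apply: le_trans (Phi_contraction _ _ _) _.
by rewrite exprS -mulrA ler_wpM2l.
Qed.

Lemma eq_prefix_comp a b n : (forall k, (k < n)%N -> a k = b k) -> pc a n = pc b n.
Proof.
elim: n => [//|n IH] ab /=; rewrite (ab n) // IH // => k kn.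
by rewrite ab // ltnW.
Qed.

Lemma prefix_comp_increment a n : `|pc a n.+1 0 - pc a n 0| <= M * c ^+ n.
Proof.
apply: le_trans (normr_le_eucl_norm _) _.
apply: le_trans (prefix_comp_contraction a n (Phi (a n) 0) 0) _.
by rewrite mulrC subr0 ler_wpM2r ?exprn_ge0.
Qed.

Lemma cvg_prefix_comp a : (fun n => pc a n 0) @ \oo --> coding Phi a.
Proof.
exact: (cvg_geometric_increments (u := fun n => pc a n 0) c_ge0 c_lt1
  (prefix_comp_increment a)).
Qed.

Lemma coding_prefix_comp_le a n : `|coding Phi a - pc a n 0| <= M * c ^+ n / (1 - c).
Proof.
exact: (geometric_increments_lim (u := fun n => pc a n 0) c_ge0 c_lt1
  (prefix_comp_increment a)).
Qed.

Lemma coding_cylinder_le a b n : (forall k, (k < n)%N -> a k = b k) ->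
  `|coding Phi a - coding Phi b| <= (M * c ^+ n / (1 - c)) *+ 2.
Proof.
move=> ab; rewrite mulr2n.
have -> : coding Phi a - coding Phi b =
    (coding Phi a - pc a n 0) - (coding Phi b - pc b n 0).
  by rewrite (eq_prefix_comp ab) opprB addrA subrK.
by apply: le_trans (ler_normB _ _) _; rewrite lerD ?coding_prefix_comp_le.
Qed.

Lemma Phi_lipschitz i x y : `|Phi i x - Phi i y| <= d%:R * `|x - y|.
Proof.
apply: le_trans (normr_le_eucl_norm _) _.
apply: le_trans (Phi_contraction _ _ _) _.
apply: le_trans _ (eucl_norm_le_normr _).
by rewrite ler_piMl ?eucl_norm_ge0 ?ltW.
Qed.

Lemma coding_cons a : coding Phi a = Phi (a 0%N) (coding Phi (left_shift a)).
Proof.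
have shiftE : (fun n => pc a n.+1 0) = Phi (a 0%N) \o (fun n => pc (left_shift a) n 0).
  by apply/funext => n; exact: prefix_compSl.
have h1 : Phi (a 0%N) \o (fun n => pc (left_shift a) n 0) @ \oo --> coding Phi a.
  by rewrite -shiftE (cvg_shiftS (fun n => pc a n 0)); exact: cvg_prefix_comp.
have h2 : Phi (a 0%N) \o (fun n => pc (left_shift a) n 0) @ \oo -->
    Phi (a 0%N) (coding Phi (left_shift a)).
  apply: cvg_comp; first exact: cvg_prefix_comp.
  exact: lipschitz_continuous (ler0n _ _) (Phi_lipschitz _) _.
exact: cvg_unique h1 h2.
Qed.

Lemma coding_open_cylinder a (U : set 'rV[R]_d) : open U -> U (coding Phi a) ->
  exists n, forall b, (forall k, (k < n)%N -> a k = b k) -> U (coding Phi b).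
Proof.
move=> oU /oU /nbhs_ballP[e e0 eU].
have c_norm : `|c| < 1 by rewrite ger0_norm.
have /cvgr0Pnorm_lt/(_ e e0)[n _ Hn] := cvg_geometric ((M / (1 - c)) *+ 2) c_norm.
exists n => b ab; apply: eU; rewrite -ball_normE /ball_ /=.
apply: le_lt_trans (coding_cylinder_le ab) _.
apply: le_lt_trans (ler_norm _) _.
by have := Hn n (leqnn n); rewrite /= mulrnAl mulrAC.
Qed.

Lemma measurable_coding_open (U : set 'rV[R]_d) : open U ->
  measurable (coding Phi @^-1` U : set (shift_space l)).
Proof.
move=> oU; pose cyl (s : seq 'I_l.+1) : set (shift_space l) := cyl_set (size s) (nth ord0 s).
pose D s := if `[< cyl s `<=` coding Phi @^-1` U >] then cyl s else set0.
have -> : coding Phi @^-1` U = \bigcup_s D s.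
  apply/seteqP; split => [a Ua|a [s _]]; last by rewrite /D; case: ifPn => // /asboolP; apply.
  have [n an] := coding_open_cylinder oU Ua.
  exists (mkseq a n) => //; rewrite /D /cyl size_mkseq ifT.
    by move=> k kn; rewrite nth_mkseq.
  by apply/asboolP => b ab; apply: an => k kn; rewrite ab // nth_mkseq.
apply: countable_bigcupT_measurable; first exact: countableP.
by move=> s; rewrite /D; case: ifPn => _; [exact: measurable_cyl_set | exact: measurable0].
Qed.

Lemma measurable_coding (B : set 'rV[R]_d) : borel_set B ->
  measurable (coding Phi @^-1` B : set (shift_space l)).
Proof. exact: measurable_preimage_generated measurable_coding_open B. Qed.

Fixpoint ifs_image (X : set 'rV[R]_d) n : set 'rV[R]_d :=
  if n is n'.+1 then \bigcup_(i : 'I_l.+1) Phi i @` ifs_image X n' else X.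

Lemma ifs_image_coding (X : set 'rV[R]_d) n a :
  X (coding Phi (iter n left_shift a)) -> ifs_image X n (coding Phi a).
Proof.
elim: n a => [//|n IH] a Xa; rewrite coding_cons.
by exists (a 0%N) => //; exists (coding Phi (left_shift a)) => //; apply: IH; rewrite -iterSr.
Qed.

End Coding.

Section LebesgueOuterMeasure.
Variables (R : realType) (d : nat).
Implicit Types (A : set 'rV[R]_d) (a b : nat -> 'rV[R]_d).
Local Open Scope ereal_scope.

Lemma box_vol_ge0 (x y : 'rV[R]_d) : (0 <= box_vol x y)%R.
Proof. by apply: prodr_ge0 => i _; rewrite le_max lexx. Qed.

Lemma lebesgue_d_ge0 A : 0 <= lebesgue_d A.
Proof.
apply: le_ereal_inf_tmp => _ [a [b [_ ->]]]; apply: nneseries_ge0 => k _ _.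
by rewrite lee_fin box_vol_ge0.
Qed.

Lemma lebesgue_d_le_cover A a b : A `<=` \bigcup_k rbox (a k) (b k) ->
  lebesgue_d A <= \sum_(0 <= k <oo) (box_vol (a k) (b k))%:E.
Proof. by move=> Acov; apply: ereal_inf_lbound; exists a, b. Qed.

Lemma le_lebesgue_d A B : A `<=` B -> lebesgue_d A <= lebesgue_d B.
Proof.
move=> AB; apply: ereal_inf_le_tmp => _ [a [b [Bcov ->]]].
by exists a, b; split => //; apply: subset_trans Bcov.
Qed.

Lemma lebesgue_d_lt_cover A (r : \bar R) : lebesgue_d A < r ->
  exists a b, A `<=` \bigcup_k rbox (a k) (b k) /\
    \sum_(0 <= k <oo) (box_vol (a k) (b k))%:E < r.
Proof. by move=> /ereal_inf_lt[_ [a [b [Acov ->]]] lt]; exists a, b. Qed.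

Lemma lebesgue_d_le_cover2 A (a b : nat -> nat -> 'rV[R]_d) :
  A `<=` \bigcup_k \bigcup_j rbox (a k j) (b k j) ->
  lebesgue_d A <= \sum_(0 <= k <oo) \sum_(0 <= j <oo) (box_vol (a k j) (b k j))%:E.
Proof.
move=> Acov; have [e e_bij] : exists e : nat -> nat * nat, set_bij setT setT e.
  exact/card_set_bijP/card_esym/card_nat2.
have [_ _ e_surj] := e_bij.
pose f (p : nat * nat) := (box_vol (a p.1 p.2) (b p.1 p.2))%:E.
have f_ge0 p : 0 <= f p by rewrite lee_fin box_vol_ge0.
apply: le_trans (lebesgue_d_le_cover (a := fun n => a (e n).1 (e n).2)
  (b := fun n => b (e n).1 (e n).2) _) _.
  move=> x /Acov[k _ [j _ xkj]].
  by have [n _ en] := e_surj (k, j) I; exists n => //; rewrite en.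
rewrite le_eqVlt; apply/orP; left; apply/eqP.
rewrite (@nneseries_esumT _ (fun n => f (e n))) // -(reindex_esum setT setT e f) //.
rewrite nneseries_esumT; last first.
  by move=> k; apply: nneseries_ge0 => j _ _; rewrite lee_fin box_vol_ge0.
transitivity (\esum_(k in [set: nat]) \esum_(j in [set: nat]) f (k, j)); last first.
  by apply: eq_esum => k _; rewrite nneseries_esumT // => j; rewrite lee_fin box_vol_ge0.
rewrite (@esum_esum _ _ _ setT (fun _ => setT) (fun k j => f (k, j))) //.
by congr esum; apply/seteqP; split.
Qed.

Lemma lebesgue_d_bigcup_le (A : nat -> set 'rV[R]_d) (r : nat -> R) :
  (forall k, lebesgue_d (A k) <= (r k)%:E) ->
  lebesgue_d (\bigcup_k A k) <= \sum_(0 <= k <oo) (r k)%:E.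
Proof.
move=> Ar; have r_ge0 k : 0 <= (r k)%:E := le_trans (lebesgue_d_ge0 _) (Ar k).
apply/lee_addgt0Pr => e e0.
have /choice[ab Hab] : forall k, exists ab : (nat -> 'rV[R]_d) * (nat -> 'rV[R]_d),
    A k `<=` \bigcup_j rbox (ab.1 j) (ab.2 j) /\
    \sum_(0 <= j <oo) (box_vol (ab.1 j) (ab.2 j))%:E < (r k)%:E + (e / (2 ^ k.+1)%:R)%:E.
  move=> k; have [|a [b ab]] := lebesgue_d_lt_cover
      (r := (r k)%:E + (e / (2 ^ k.+1)%:R)%:E) (A := A k).
    by apply: le_lt_trans (Ar k) _; rewrite -EFinD lte_fin ltrDl divr_gt0 // ltr0n expn_gt0.
  by exists (a, b).
apply: le_trans (lebesgue_d_le_cover2 (a := fun k => (ab k).1) (b := fun k => (ab k).2) _) _.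
  by move=> x [k _ /(proj1 (Hab k))[j _ xj]]; exists k => //; exists j.
apply: le_trans (epsilon_trick xpredT r_ge0 (ltW e0)).
apply: lee_nneseries => [k _ _|k _]; last exact: ltW (proj2 (Hab k)).
by apply: nneseries_ge0 => j _ _; rewrite lee_fin box_vol_ge0.
Qed.

Lemma lebesgue_d_bigcup0 (A : nat -> set 'rV[R]_d) :
  (forall k, lebesgue_d (A k) = 0) -> lebesgue_d (\bigcup_k A k) = 0.
Proof.
move=> A0; apply/eqP; rewrite eq_le lebesgue_d_ge0 andbT.
have := @lebesgue_d_bigcup_le A (fun=> 0%R).
by rewrite eseries0 //; apply => k; rewrite A0.
Qed.

Lemma borel_setC A : borel_set A -> borel_set (~` A).
Proof. by move=> bA; rewrite -setTD; apply: sigma_algebraCD. Qed.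

Lemma borel_set_bigcup (A : nat -> set 'rV[R]_d) :
  (forall k, borel_set (A k)) -> borel_set (\bigcup_k A k).
Proof. by move=> bA; apply: sigma_algebra_bigcup. Qed.

Lemma borel_set_bigcap (A : nat -> set 'rV[R]_d) :
  (forall k, borel_set (A k)) -> borel_set (\bigcap_k A k).
Proof.
move=> bA; rewrite -[X in borel_set X]setCK setC_bigcap.
by apply: borel_setC; apply: borel_set_bigcup => k; exact: borel_setC.
Qed.

Lemma borel_set_closed A : closed A -> borel_set A.
Proof.
move=> cA; rewrite -[A]setCK; apply: borel_setC.
by apply: sub_sigma_algebra; rewrite /= openC.
Qed.

Lemma rbox_closed (x y : 'rV[R]_d) : closed (rbox x y).
Proof.
pose coord i (z : 'rV[R]_d) := z ord0 i.
have -> : rbox x y = \bigcap_(i in [set: 'I_d])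
    (coord i @^-1` [set t | x ord0 i <= t]%R `&` coord i @^-1` [set t | t <= y ord0 i]%R).
  apply/seteqP; split => z /= xyz; first by move=> i _; have /andP[] := xyz i.
  by move=> i; have [/= -> ->] := xyz i I.
have coord_cont i : continuous (coord i) by move=> z; exact: coord_continuous.
by apply: closed_bigI => i _; apply: closedI; apply: preimage_closed.
Qed.

Lemma lebesgue_d_null_hull A : lebesgue_d A = 0 ->
  exists G, [/\ borel_set G, A `<=` G & lebesgue_d G = 0].
Proof.
move=> A0.
have /choice[ab Hab] : forall m, exists ab : (nat -> 'rV[R]_d) * (nat -> 'rV[R]_d),
    A `<=` \bigcup_j rbox (ab.1 j) (ab.2 j) /\
    \sum_(0 <= j <oo) (box_vol (ab.1 j) (ab.2 j))%:E < (2^-1 ^+ m)%:E.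
  move=> m; have [|a [b ab]] := lebesgue_d_lt_cover (r := (2^-1 ^+ m)%:E) (A := A).
    by rewrite A0 lte_fin.
  by exists (a, b).
exists (\bigcap_m \bigcup_j rbox ((ab m).1 j) ((ab m).2 j)); split.
- apply: borel_set_bigcap => m; apply: borel_set_bigcup => j.
  by apply: borel_set_closed; apply: rbox_closed.
- by move=> x Ax m _; exact: (proj1 (Hab m)).
apply/eqP; rewrite eq_le lebesgue_d_ge0 andbT; apply/lee_addgt0Pr => e e0.
have half_lt1 : (`|2^-1 : R| < 1)%R by rewrite ger0_norm ?invr_ge0 // invf_lt1 // ltr1n.
have /cvgr0Pnorm_lt/(_ e e0)[m _ Hm] := cvg_geometric 1 half_lt1.
have Gcov : \bigcap_m \bigcup_j rbox ((ab m).1 j) ((ab m).2 j) `<=`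
    \bigcup_j rbox ((ab m).1 j) ((ab m).2 j) by move=> x; apply.
apply: le_trans (lebesgue_d_le_cover Gcov) _.
apply: le_trans (ltW (proj2 (Hab m))) _.
by rewrite add0e lee_fin ltW //; have := Hm m (leqnn m); rewrite /= mul1r ger0_norm // ltW.
Qed.

Lemma lebesgue_d_le_fincover (I : finType) A (x y : I -> 'rV[R]_d) : (0 < d)%N ->
  A `<=` \bigcup_(i in [set: I]) rbox (x i) (y i) ->
  lebesgue_d A <= (\sum_i box_vol (x i) (y i))%:E.
Proof.
move=> d_gt0 Acov.
pose s := [seq (x i, y i) | i <- enum I].
(* out of range, [nth] returns the empty box [[1, 0]], of volume 0 as d > 0 *)
pose box k := nth (const_mx 1%R : 'rV[R]_d, 0%R) s k.
have empty_box : box_vol (const_mx 1%R : 'rV[R]_d) 0%R = 0%R.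
  rewrite /box_vol; case: d d_gt0 => // n _.
  by rewrite big_ord_recl !mxE sub0r max_l ?lerN10 ?mul0r.
apply: le_trans (lebesgue_d_le_cover (a := fun k => (box k).1) (b := fun k => (box k).2) _) _.
  move=> z /Acov[i _ zi]; exists (index i (enum I)) => //.
  by rewrite /box /s (nth_map i) ?nth_index ?mem_enum // index_mem mem_enum.
rewrite (@nneseries_split _ _ 0 (size s)); last by move=> k _; rewrite lee_fin box_vol_ge0.
rewrite add0n eseries0 ?adde0 ?sumEFin; last first.
  by move=> k sk _; rewrite /box nth_default //= empty_box.
rewrite lee_fin le_eqVlt; apply/orP; left; apply/eqP.
by rewrite /box -(big_nth _ xpredT (fun p => box_vol p.1 p.2)) big_map big_enum.
Qed.

End LebesgueOuterMeasure.

(* In dimension 0 every box has volume 1, an empty product. *)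
Lemma lebesgue_d_dim0_neq0 (R : realType) (A : set 'rV[R]_0) : lebesgue_d A <> 0%E.
Proof.
have : (1%:E <= lebesgue_d A)%E.
  apply: le_ereal_inf_tmp => _ [a [b [_ ->]]].
  apply: le_trans (nneseries_lim_ge 1 _); last by move=> n _ _; rewrite lee_fin box_vol_ge0.
  by rewrite big_nat1 /box_vol big_ord0.
by move=> h A0; rewrite A0 lee_fin ler10 in h.
Qed.

Lemma prod_perturb_le (R : realDomainType) n (s : 'I_n -> R) (t : R) :
  (forall i, 0 <= s i) -> 0 <= t -> t <= 1 ->
  \prod_(i < n) (s i + t) <= \prod_(i < n) s i + t * (n%:R * \prod_(i < n) (s i + 1)).
Proof.
elim: n s => [|n IH] s s0 t0 t1; first by rewrite !big_ord0 mul0r mulr0 addr0.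
rewrite big_ord_recr [X in _ <= X + _]big_ord_recr [X in _ <= _ + _ * (_ * X)]big_ord_recr /=.
set P := \prod_(i < n) s (widen_ord _ i).
set Q := \prod_(i < n) (s (widen_ord _ i) + t).
set T := \prod_(i < n) (s (widen_ord _ i) + 1).
set x := s ord_max.
have IHs : Q <= P + t * (n%:R * T) by apply: IH.
have P0 : 0 <= P by apply: prodr_ge0.
have Q0 : 0 <= Q by apply: prodr_ge0 => i _; rewrite addr_ge0.
have PT : P <= T by apply: ler_prod => i _; rewrite s0 /= lerDl.
have x0 : 0 <= x by exact: s0.
have n0 : 0 <= n%:R :> R by exact: ler0n.
have T0 : 0 <= T by apply: le_trans PT.
rewrite -natr1.
have h1 : Q * (x + t) <= (P + t * (n%:R * T)) * (x + t).
  by apply: ler_wpM2r => //; rewrite addr_ge0.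
have h2 : t * P <= t * (T * (x + 1)).
  by apply: ler_wpM2l => //; apply: le_trans PT _; rewrite ler_peMr // lerDr.
have h3 : t * (n%:R * T) * t <= t * (n%:R * T) * 1.
  by apply: ler_wpM2l => //; rewrite !mulr_ge0.
nra.
Qed.

Section LipschitzImage.
Variables (R : realType) (d : nat) (f : 'rV[R]_d -> 'rV[R]_d) (K : R).
Hypotheses (d_gt0 : (0 < d)%N) (K_ge0 : 0 <= K).
Hypothesis f_lipschitz : forall x y, `|f x - f y| <= K * `|x - y|.

Lemma lebesgue_d_image_rbox (x y : 'rV[R]_d) (dl : R) : 0 < dl ->
  (lebesgue_d (f @` rbox x y) <=
    ((2 * K) ^+ d * \prod_(i < d) (Num.max 0 (y ord0 i - x ord0 i) + dl))%:E)%E.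
Proof.
move=> dl_gt0; pose s i := Num.max 0 (y ord0 i - x ord0 i).
have s_ge0 i : 0 <= s i by rewrite le_max lexx.
(* The box is covered by the cells of the grid of mesh [dl] with [Ni i] points
   on axis [i]; [f] maps the cell with corner [corner j] into the cube of side
   [2 K dl] around [f (corner j)].  Grid points beyond [Ni i] get width 0. *)
pose Ni i := (Num.truncn (s i / dl)).+1.
pose N := \max_(i < d) Ni i.
pose corner (j : {ffun 'I_d -> 'I_N.+1}) : 'rV[R]_d := \row_i (x ord0 i + (j i)%:R * dl).
pose width i (k : 'I_N.+1) := if (k < Ni i)%N then 2 * K * dl else 0.
pose lo j : 'rV[R]_d := \row_i (f (corner j) ord0 i - K * dl).
pose hi j : 'rV[R]_d := \row_i (f (corner j) ord0 i - K * dl + width i (j i)).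
apply: le_trans (lebesgue_d_le_fincover (x := lo) (y := hi) d_gt0 _) _.
  move=> _ [z zxy <-].
  have zx_ge0 i : 0 <= (z ord0 i - x ord0 i) / dl.
    by have /andP[h _] := zxy i; rewrite divr_ge0 ?subr_ge0 // ltW.
  pose k i := Num.truncn ((z ord0 i - x ord0 i) / dl).
  have k_lt i : (k i < Ni i)%N.
    rewrite ltnS truncn_le_nat; apply: le_lt_trans (truncnS_gt _).
    apply: ler_wpM2r; first by rewrite invr_ge0 ltW.
    by have /andP[_ h] := zxy i; rewrite le_max lerB ?orbT.
  pose jz : {ffun 'I_d -> 'I_N.+1} := [ffun i => inord (k i)].
  have jzE i : (jz i : nat) = k i.
    by rewrite ffunE inordK // ltnS (leq_trans _ (leq_bigmax i)) // ltnW.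
  have z_near : `|z - corner jz| <= dl.
    apply: normr_le_coord => [|i]; first exact: ltW.
    rewrite !mxE jzE; have /andP[h1 h2] := truncn_itv (zx_ge0 i).
    have zE : z ord0 i - x ord0 i = (z ord0 i - x ord0 i) / dl * dl by rewrite divfK ?gt_eqF.
    rewrite -/(k i) in h1 h2; rewrite -natr1 in h2.
    have h1' := ler_wpM2r (ltW dl_gt0) h1; have h2' := ler_wpM2r (ltW dl_gt0) (ltW h2).
    rewrite ler_norml; apply/andP; split; nra.
  exists jz => //= i; have := coord_le_normr (f z - f (corner jz)) i.
  move=> /le_trans/(_ (le_trans (f_lipschitz _ _) (ler_wpM2l K_ge0 z_near))).
  rewrite !mxE /width jzE k_lt ler_norml => /andP[h1 h2]; apply/andP; split; nra.
have -> : \sum_j box_vol (lo j) (hi j) =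
    \sum_(j : {ffun 'I_d -> 'I_N.+1}) \prod_i width i (j i).
  apply: eq_bigr => j _; apply: eq_bigr => i _; rewrite !mxE [_ + _ - _]addrC addKr /width.
  by case: ifP => _; [rewrite max_r // !mulr_ge0 // ltW | rewrite maxxx].
rewrite -(bigA_distr_bigA width) lee_fin.
have -> : (2 * K) ^+ d * \prod_(i < d) (s i + dl) = \prod_(i < d) (2 * K * (s i + dl)).
  by rewrite big_split /= prodr_const card_ord.
apply: ler_prod => i _; apply/andP; split.
  by apply: sumr_ge0 => k _; rewrite /width; case: ifP => // _; rewrite !mulr_ge0 // ltW.
have NiN : (Ni i <= N.+1)%N by apply: leq_trans (leq_bigmax i) _.
rewrite /width -(big_mkord xpredT (fun k : nat => if (k < Ni i)%N then 2 * K * dl else 0)).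
rewrite (big_cat_nat _ (n := Ni i)) //= [X in _ + X]big1_seq ?addr0; last first.
  by move=> k /andP[_]; rewrite mem_index_iota => /andP[h _]; rewrite ltnNge h.
rewrite big_nat_cond (eq_bigr (fun=> 2 * K * dl)); last by move=> k /andP[/andP[_ ->]].
rewrite -big_nat_cond sumr_const_nat subn0 /Ni -[(2 * K * dl) *+ _]mulr_natr -natr1.
have ht : (Num.truncn (s i / dl))%:R * dl <= s i.
  by rewrite -ler_pdivlMr // truncn_le divr_ge0 // ltW.
set t := (Num.truncn _)%:R in ht *.
have hK : 0 <= K * (s i - t * dl) by rewrite mulr_ge0 // subr_ge0.
nra.
Qed.

Lemma lebesgue_d_lipschitz_image0 (A : set 'rV[R]_d) :
  lebesgue_d A = 0%E -> lebesgue_d (f @` A) = 0%E.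
Proof.
move=> A0; apply/eqP; rewrite eq_le lebesgue_d_ge0 andbT; apply/lee_addgt0Pr => eps eps_gt0.
pose C := (2 * K) ^+ d.
have C_ge0 : 0 <= C by rewrite exprn_ge0 // mulr_ge0.
pose eta := eps / (2 * C + 2).
have eta_gt0 : 0 < eta by rewrite divr_gt0 // ltr_wpDl // mulr_ge0.
have [|a [b [Acov Asum]]] := lebesgue_d_lt_cover (r := eta%:E) (A := A).
  by rewrite A0 lte_fin.
pose s k i := Num.max 0 (b k ord0 i - a k ord0 i).
have s_ge0 k i : 0 <= s k i by rewrite le_max lexx.
pose e k := eta / (2 ^ k.+1)%:R.
have e_gt0 k : 0 < e k by rewrite divr_gt0 // ltr0n expn_gt0.
pose D k := d%:R * \prod_(i < d) (s k i + 1).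
have D_ge0 k : 0 <= D k by rewrite mulr_ge0 // prodr_ge0 // => i _; rewrite addr_ge0.
(* with this mesh, the grid cover of the k-th box wastes volume at most [e k] *)
pose dl k := Num.min 1 (e k / (D k + 1)).
have dl_gt0 k : 0 < dl k by rewrite lt_min ltr01 divr_gt0 // ltr_wpDl.
have dlD k : dl k * D k <= e k.
  have : dl k <= e k / (D k + 1) by rewrite ge_min lexx orbT.
  move=> /(ler_wpM2r (D_ge0 k))/le_trans; apply.
  by rewrite mulrAC ler_pdivrMr ?ltr_wpDl // ler_wpM2l ?lerDl // ltW.
have box_bound k : (lebesgue_d (f @` rbox (a k) (b k)) <=
    (C * (box_vol (a k) (b k) + e k))%:E)%E.
  apply: le_trans (lebesgue_d_image_rbox _ _ (dl_gt0 k)) _; rewrite lee_fin ler_wpM2l //.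
  apply: le_trans (prod_perturb_le (s_ge0 k) (ltW (dl_gt0 k)) _) _.
    by rewrite ge_min lexx.
  by rewrite lerD // mulrC.
have fAcov : f @` A `<=` \bigcup_k f @` rbox (a k) (b k).
  by move=> _ [z /Acov[k _ zk] <-]; exists k => //; exists z.
apply: le_trans (le_lebesgue_d fAcov) _; apply: le_trans (lebesgue_d_bigcup_le box_bound) _.
under eq_eseriesr do rewrite EFinM EFinD.
rewrite nneseriesZl; last by move=> k _; rewrite -EFinD lee_fin addr_ge0 ?box_vol_ge0 ?ltW.
apply: (le_trans (lee_wpmul2l _ (epsilon_trick xpredT _ (ltW eta_gt0)))).
- by rewrite lee_fin.
- by move=> k; rewrite lee_fin box_vol_ge0.
have Csum : (\sum_(0 <= k <oo) (box_vol (a k) (b k))%:E + eta%:E <= (eta + eta)%:E)%E.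
  by rewrite EFinD leeD2r // ltW.
apply: (le_trans (lee_wpmul2l _ Csum)); first by rewrite lee_fin.
rewrite -EFinM add0e lee_fin /eta.
have -> : C * (eps / (2 * C + 2) + eps / (2 * C + 2)) = eps * (2 * C / (2 * C + 2)).
  by field; rewrite gt_eqF // ltr_wpDl // mulr_ge0.
apply: ler_piMr; first exact: ltW.
by rewrite ler_pdivrMr ?ltr_wpDl ?mulr_ge0 // mul1r lerDl.
Qed.

End LipschitzImage.

Lemma lebesgue_d_ifs_image0 (R : realType) (d l : nat) (K : R)
    (Phi : 'I_l.+1 -> 'rV[R]_d -> 'rV[R]_d) (X : set 'rV[R]_d) n :
  (0 < d)%N -> 0 <= K -> (forall i x y, `|Phi i x - Phi i y| <= K * `|x - y|) ->
  lebesgue_d X = 0%E -> lebesgue_d (ifs_image Phi X n) = 0%E.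
Proof.
move=> d_gt0 K_ge0 Phi_lip X0; elim: n => [//|n IH] /=.
have image0 k : lebesgue_d (Phi (inord k) @` ifs_image Phi X n) = 0%E.
  exact: (lebesgue_d_lipschitz_image0 d_gt0 K_ge0 (Phi_lip _) IH).
apply/eqP; rewrite eq_le lebesgue_d_ge0 andbT -(lebesgue_d_bigcup0 image0).
by apply: le_lebesgue_d => x [i _ xi]; exists i => //; rewrite inord_val.
Qed.

Lemma probability_setC_sub0 (dT : measure_display) (T : measurableType dT)
    (R : realType) (P : probability T R) (A B : set T) :
  measurable A -> measurable B -> A `<=` B -> P A = 1%E -> P (~` B) = 0%E.
Proof.
move=> mA mB AB PA1; rewrite probability_setC //.
suff -> : P B = 1%E by rewrite subee.
apply/eqP; rewrite eq_le probability_le1 //= -PA1.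
by apply: le_measure; rewrite ?inE.
Qed.

Section Ergodic.
Variables (R : realType) (l : nat) (m : probability (shift_space l) R).
Hypotheses (m_inv : shift_invariant m) (m_erg : shift_ergodic m).
Local Open Scope ereal_scope.

(* The preimages of B under the iterates of the shift decrease, all have the
   measure of B, and their intersection is shift-invariant. *)
Lemma ergodic_subinvariant (B : set (shift_space l)) : measurable B ->
  left_shift @^-1` B `<=` B -> m B = 0 \/ m B = 1.
Proof.
move=> mB sB; pose F n := iter n left_shift @^-1` B.
have FS n : F n.+1 = left_shift @^-1` F n.
  by apply/seteqP; split => a; rewrite /F /preimage /= -iterSr.
have mF n : measurable (F n) by exact: measurable_iter_left_shift.
have mFE n : m (F n) = m B by elim: n => [//|n IH]; rewrite FS m_inv.
have F_sub n : F n.+1 `<=` F n by move=> a; rewrite /F /preimage /= => /sB.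
have F_decr : nonincreasing_seq F.
  by apply/nonincreasing_seqP => n; apply/subsetPset; exact: F_sub.
have mI : measurable (\bigcap_n F n) by exact: bigcapT_measurable.
have mF_cvg := nonincreasing_cvg_mu
  (le_lt_trans (probability_le1 m (mF 0%N)) (ltry _)) mF mI F_decr.
have mIE : m (\bigcap_n F n) = m B.
  apply: (@cvg_unique _ _ (m \o F @ \oo)) => //.
  by rewrite (_ : m \o F = cst (m B)); [exact: cvg_cst | apply/funext => n; rewrite /= mFE].
have F_inv : left_shift @^-1` (\bigcap_n F n) = \bigcap_n F n.
  apply/seteqP; split => a /= Fa n _; last by have := Fa n.+1 I; rewrite FS.
  by apply: F_sub; rewrite FS; exact: Fa n I.
by rewrite -mIE; exact: (m_erg mI F_inv).
Qed.

Lemma ergodic_saturation (E : set (shift_space l)) : measurable E -> m E <> 0 ->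
  m (\bigcup_n iter n left_shift @^-1` E) = 1.
Proof.
move=> mE E0; set B := \bigcup_n _.
have mB : measurable B by exact: measurable_bigcup_iter_left_shift.
have sB : left_shift @^-1` B `<=` B.
  by move=> a [n _ Ea]; exists n.+1 => //; move: Ea; rewrite /preimage /= -iterSr.
case: (ergodic_subinvariant mB sB) => // B0; exfalso; apply: E0.
apply/eqP; rewrite eq_le measure_ge0 andbT -B0 le_measure // ?inE //.
by move=> a Ea; exists 0%N.
Qed.

End Ergodic.

Unset Implicit Arguments.

Theorem mainTheorem18 (R : realType) (d l : nat)
  (Phi : 'I_l.+1 -> 'rV[R]_d -> 'rV[R]_d)
  (hPhi : forall i, eucl_contraction (Phi i))
  (m : probability (shift_space l) R)
  (hinv : shift_invariant m) (herg : shift_ergodic m) :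
  abs_cont_leb (push_coding Phi m) \/ singular_leb (push_coding Phi m).
Proof.
have [d0|d_gt0] := posnP d.
  by left => A _ A0; exfalso; move: A A0; rewrite d0 => A /lebesgue_d_dim0_neq0.
have [c /andP[c_ge0 c_lt1] Phi_contr] := uniform_eucl_contraction hPhi.
pose M := \sum_i eucl_norm (Phi i 0).
have Phi0_le i : eucl_norm (Phi i 0) <= M.
  by rewrite /M (bigD1 i) //= lerDl sumr_ge0 // => j _; exact: eucl_norm_ge0.
have [|/existsNP[A /not_implyP[bA /not_implyP[A0 muA]]]] :=
  pselect (abs_cont_leb (push_coding Phi m)); first by left.
right; have mcod := measurable_coding c_ge0 c_lt1 Phi_contr Phi0_le.
have B1 := ergodic_saturation hinv herg (mcod _ bA) muA.
have [G [bG NG G0]] := lebesgue_d_null_hull (lebesgue_d_bigcup0 (fun n =>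
  lebesgue_d_ifs_image0 n d_gt0 (ler0n _ d) (Phi_lipschitz c_lt1 Phi_contr) A0)).
exists (~` G); split; first exact: borel_setC.
split; last by rewrite setCK.
rewrite /push_coding preimage_setC; apply: (probability_setC_sub0 _ (mcod _ bG) _ B1).
  by apply: measurable_bigcup_iter_left_shift; exact: mcod.
move=> a [n _ Aa]; apply: NG; exists n => //.
exact: (ifs_image_coding c_ge0 c_lt1 Phi_contr Phi0_le).
Qed.
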